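(* Let $b\ge 3$ be an integer, $n=2^{b-2}$, $W^f\in\mathbb{R}^N$ with components of pairwise distinct absolute values, and $\mu>0$. Define $\tilde Q\in\mathbb{R}^N$ componentwise by $$\tilde Q_i=\begin{cases}0 & \text{if } |W^f_i|<\tfrac{2^{2-n}}{3}\mu,\\ \mathrm{sign}(W^f_i)\,2^{1-n} & \text{if } \tfrac{2^{2-n}}{3}\mu\le |W^f_i|<2^{2-n}\mu,\\ \mathrm{sign}(W^f_i)\,2^{-t} & \text{if } 2^{-t}\mu\le |W^f_i|<2^{-t+1}\mu,\quad t=1,\dots,n-2,\\ \mathrm{sign}(W^f_i) & \text{if } \mu\le |W^f_i|,\end{cases}$$ and assume $\tilde Q\neq 0$. For $t=0,\dots,n-1$ let $\tilde k_t$ be the number of indices $i$ with $|\tilde Q_i|=2^{-t}$. Then $$\tilde s^*=\left\lfloor \log_2\frac{4\sum_{t=0}^{n-1}2^{-t}\|W^f_{[\tilde k_t]}\|_1}{3\sum_{t=0}^{n-1}\tilde k_t\,2^{-2t}}\right\rfloor$$ minimizes $\|2^s\tilde Q-W^f\|_2^2$ over all $s\in\mathbb{Z}$.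
   Context: Notation: sort the indices of $W^f$ by decreasing $|W^f_i|$. Given nonnegative integers $k_0,\dots,k_{n-1}$ with $\sum_t k_t\le N$, the vector $W^f_{[k_0]}\in\mathbb{R}^N$ keeps the $k_0$ components of $W^f$ of largest magnitude and sets all other components to zero; $W^f_{[k_1]}$ keeps the next $k_1$ largest-magnitude components (those ranked $k_0+1,\dots,k_0+k_1$) and zeros out all others; in general $W^f_{[k_t]}$ keeps the components ranked $k_0+\dots+k_{t-1}+1,\dots,k_0+\dots+k_t$ in magnitude and zeros out the rest. $\mathrm{sign}$ is applied componentwise with $\mathrm{sign}(0)=0$. $\lfloor\cdot\rfloor$ is the floor function and $\|\cdot\|_1$ the $\ell^1$ norm. *)

From Stdlib Require Import Reals Lra Lia ZArith Arith List.
Import ListNotations.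
Open Scope R_scope.

Definition sgn (x : R) : R :=
  if Rlt_dec 0 x then 1 else if Rlt_dec x 0 then -1 else 0.

Definition sumR (f : nat -> R) (m : nat) : R :=
  fold_right Rplus 0 (map f (seq 0 m)).

Definition countN (P : nat -> bool) (m : nat) : nat :=
  length (filter P (seq 0 m)).

Fixpoint first_band (mu a : R) (ts : list nat) : option nat :=
  match ts with
  | nil => None
  | t :: ts' =>
      if Rle_dec (/ 2 ^ t * mu) a then
        if Rlt_dec a (/ 2 ^ (t - 1) * mu) then Some t else first_band mu a ts'
      else first_band mu a ts'
  end.

Definition Qtil (n : nat) (mu w : R) : R :=
  let a := Rabs w in
  if Rlt_dec a (/ 2 ^ (n - 2) / 3 * mu) then 0
  else if Rlt_dec a (/ 2 ^ (n - 2) * mu) then sgn w * / 2 ^ (n - 1)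
  else if Rle_dec mu a then sgn w
  else match first_band mu a (seq 1 (n - 2)) with
       | Some t => sgn w * / 2 ^ t
       | None => 0
       end.

Definition ktil (N n : nat) (mu : R) (W : nat -> R) (t : nat) : nat :=
  countN (fun i => if Req_EM_T (Rabs (Qtil n mu (W i))) (/ 2 ^ t) then true else false) N.

(* 0-based rank of index i in decreasing order of |W_i| *)
Definition rank (N : nat) (W : nat -> R) (i : nat) : nat :=
  countN (fun j => if Rlt_dec (Rabs (W i)) (Rabs (W j)) then true else false) N.

Fixpoint prefix (k : nat -> nat) (t : nat) : nat :=
  match t with O => O | S t' => (prefix k t' + k t')%nat end.

(* || W_{[k_t]} ||_1 : l1 norm of components ranked prefix t + 1 .. prefix (t+1) *)
Definition block_l1 (N : nat) (W : nat -> R) (k : nat -> nat) (t : nat) : R :=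
  sumR (fun i =>
          if andb (Nat.leb (prefix k t) (rank N W i)) (Nat.ltb (rank N W i) (prefix k (S t)))
          then Rabs (W i) else 0) N.

Definition log2R (x : R) : R := ln x / ln 2.

(* floor via Stdlib's Int_part (= up x - 1) *)
Definition sstar (N n : nat) (mu : R) (W : nat -> R) : Z :=
  let k := ktil N n mu W in
  Int_part (log2R ((4 * sumR (fun t => / 2 ^ t * block_l1 N W k t) n)
                   / (3 * sumR (fun t => INR (k t) * / 2 ^ (2 * t)) n))).

Definition err (N n : nat) (mu : R) (W : nat -> R) (s : Z) : R :=
  sumR (fun i => (powerRZ 2 s * Qtil n mu (W i) - W i) ^ 2) N.

(* The magnitude |Q_i| is a nondecreasing function h of |W_i| with values in
   {0} ∪ {2^-t | t < n}.  Hence the indices with |Q_i| = 2^-t are exactly those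
   of rank k_0 + ... + k_(t-1) up to k_0 + ... + k_t - 1, so the numerator and
   denominator of the formula are 4B and 3A with B = Σ |Q_i| |W_i| and
   A = Σ Q_i^2.  Then ||2^s Q - W||^2 = A x^2 - 2 B x + ||W||^2 with x = 2^s, and
   the quadratic takes equal values at x and 2x exactly when x = 2B/(3A); so the
   power of two x with x <= 4B/(3A) < 2x does at least as well as all others. *)

From Stdlib Require Import Bool Reals ZArith Arith List Lra Lia.
Open Scope R_scope.

Lemma sumR_S f m : sumR f (S m) = sumR f m + f m.
Proof.
  unfold sumR. rewrite seq_S, map_app, fold_right_app; simpl.
  induction (map f (seq 0 m)) as [|x l IHl]; simpl; [ring | rewrite IHl; ring].
Qed.

Lemma sumR_ext f g m : (forall i, (i < m)%nat -> f i = g i) -> sumR f m = sumR g m.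
Proof. induction m; intros Hfg; [reflexivity |]. rewrite !sumR_S, IHm, Hfg; auto. Qed.

Lemma sumR_plus f g m : sumR (fun i => f i + g i) m = sumR f m + sumR g m.
Proof. induction m; [unfold sumR; simpl; ring |]. rewrite !sumR_S, IHm; ring. Qed.

Lemma sumR_scal c f m : sumR (fun i => c * f i) m = c * sumR f m.
Proof. induction m; [unfold sumR; simpl; ring |]. rewrite !sumR_S, IHm; ring. Qed.

Lemma sumR_eq0 f m : (forall i, (i < m)%nat -> f i = 0) -> sumR f m = 0.
Proof. induction m; intros Hf; [reflexivity |]. rewrite sumR_S, IHm, Hf; auto; ring. Qed.

Lemma sumR_comm (g : nat -> nat -> R) m n :
  sumR (fun i => sumR (fun t => g i t) n) m = sumR (fun t => sumR (fun i => g i t) m) n.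
Proof.
  induction m.
  - symmetry. apply sumR_eq0. reflexivity.
  - rewrite sumR_S, IHm, <- sumR_plus. apply sumR_ext; intros t _. now rewrite sumR_S.
Qed.

Lemma sumR_only f m s :
  (s < m)%nat -> (forall t, (t < m)%nat -> t <> s -> f t = 0) -> sumR f m = f s.
Proof.
  induction m; intros Hs Hf; [lia |]. rewrite sumR_S.
  destruct (Nat.eq_dec s m) as [-> | Hne].
  - rewrite sumR_eq0; [ring |]. intros; apply Hf; lia.
  - rewrite IHm, (Hf m); auto; try lia; ring.
Qed.

Lemma sumR_ge0 f m : (forall i, (i < m)%nat -> 0 <= f i) -> 0 <= sumR f m.
Proof.
  induction m; intros Hf; [unfold sumR; simpl; lra |]. rewrite sumR_S.
  pose proof (IHm ltac:(auto)). pose proof (Hf m ltac:(lia)). lra.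
Qed.

Lemma sumR_gt0 f m i :
  (forall i, (i < m)%nat -> 0 <= f i) -> (i < m)%nat -> 0 < f i -> 0 < sumR f m.
Proof.
  induction m; intros Hf Hi Hfi; [lia |]. rewrite sumR_S.
  pose proof (sumR_ge0 f m ltac:(auto)). pose proof (Hf m ltac:(lia)).
  destruct (Nat.eq_dec i m) as [-> | Hne]; [lra |].
  pose proof (IHm ltac:(auto) ltac:(lia) Hfi). lra.
Qed.

Lemma countN_S P m : countN P (S m) = (countN P m + if P m then 1 else 0)%nat.
Proof.
  unfold countN. rewrite seq_S, filter_app, length_app; simpl.
  destruct (P m); simpl; lia.
Qed.

Lemma countN_ext P Q m : (forall i, (i < m)%nat -> P i = Q i) -> countN P m = countN Q m.
Proof. induction m; intros HPQ; [reflexivity |]. rewrite !countN_S, IHm, HPQ; auto. Qed.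

Lemma countN_eq0 P m : (forall i, (i < m)%nat -> P i = false) -> countN P m = 0%nat.
Proof. induction m; intros HP; [reflexivity |]. rewrite countN_S, IHm, HP; auto. Qed.

Lemma countN_mono P Q m :
  (forall i, (i < m)%nat -> P i = true -> Q i = true) -> (countN P m <= countN Q m)%nat.
Proof.
  induction m; intros HPQ; [unfold countN; simpl; lia |]. rewrite !countN_S.
  pose proof (IHm ltac:(auto)). specialize (HPQ m ltac:(lia)).
  destruct (P m), (Q m); try lia; discriminate (HPQ eq_refl).
Qed.

Lemma countN_mono_lt P Q m i :
  (forall i, (i < m)%nat -> P i = true -> Q i = true) -> (i < m)%nat ->
  P i = false -> Q i = true -> (countN P m < countN Q m)%nat.
Proof.
  induction m; intros HPQ Hi HPi HQi; [lia |]. rewrite !countN_S.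
  destruct (Nat.eq_dec i m) as [-> | Hne].
  - pose proof (countN_mono P Q m ltac:(auto)). rewrite HPi, HQi; lia.
  - pose proof (IHm ltac:(auto) ltac:(lia) HPi HQi). specialize (HPQ m ltac:(lia)).
    destruct (P m), (Q m); try lia; discriminate (HPQ eq_refl).
Qed.

Lemma countN_disjoint_orb R P Q m :
  (forall i, (i < m)%nat -> R i = P i || Q i /\ P i && Q i = false) ->
  countN R m = (countN P m + countN Q m)%nat.
Proof.
  induction m; intros HR; [reflexivity |]. rewrite !countN_S, IHm by auto.
  destruct (HR m ltac:(lia)) as [-> Hdisj]. destruct (P m), (Q m); simpl in *; lia.
Qed.

Lemma INR_countN_mul P c m : INR (countN P m) * c = sumR (fun i => if P i then c else 0) m.
Proof.
  induction m; [unfold sumR; simpl; ring |].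
  rewrite countN_S, sumR_S, plus_INR, <- IHm. destruct (P m); simpl; ring.
Qed.

Lemma inv_pow2_pos t : 0 < / 2 ^ t.
Proof. apply Rinv_0_lt_compat, pow_lt; lra. Qed.

Lemma inv_pow2_lt s t : (s < t)%nat -> / 2 ^ t < / 2 ^ s.
Proof.
  intros Hst. apply Rinv_lt_contravar.
  - apply Rmult_lt_0_compat; apply pow_lt; lra.
  - apply Rlt_pow; [lra | lia].
Qed.

Lemma inv_pow2_le s t : (s <= t)%nat -> / 2 ^ t <= / 2 ^ s.
Proof.
  intros Hst. destruct (Nat.eq_dec s t) as [-> | Hne]; [lra |].
  left; apply inv_pow2_lt; lia.
Qed.

Lemma inv_pow2_le1 t : / 2 ^ t <= 1.
Proof. pose proof (inv_pow2_le 0 t ltac:(lia)). simpl in *; lra. Qed.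

Lemma inv_pow2_lt_inv s t : / 2 ^ t < / 2 ^ s -> (s < t)%nat.
Proof. intros Hlt. destruct (Nat.lt_ge_cases s t) as [|Hts]; auto. pose proof (inv_pow2_le t s Hts). lra. Qed.

Lemma inv_pow2_inj s t : / 2 ^ t = / 2 ^ s -> s = t.
Proof.
  intros E. destruct (Nat.lt_total s t) as [Hlt | [Heq | Hlt]]; auto;
  pose proof (inv_pow2_lt _ _ Hlt); lra.
Qed.

Definition level (n : nat) (mu a : R) : R :=
  if Rlt_dec a (/ 2 ^ (n - 2) / 3 * mu) then 0
  else if Rlt_dec a (/ 2 ^ (n - 2) * mu) then / 2 ^ (n - 1)
  else if Rle_dec mu a then 1
  else match first_band mu a (seq 1 (n - 2)) with
       | Some t => / 2 ^ t
       | None => 0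
       end.

Lemma Qtil_level n mu w : Qtil n mu w = sgn w * level n mu (Rabs w).
Proof.
  unfold Qtil, level.
  repeat match goal with |- context [if ?c then _ else _] => destruct c end; try ring.
  destruct (first_band _ _ _); ring.
Qed.

Lemma first_band_Some mu a l t :
  first_band mu a l = Some t -> In t l /\ / 2 ^ t * mu <= a < / 2 ^ (t - 1) * mu.
Proof.
  induction l as [|t' l IHl]; simpl; [discriminate |].
  destruct (Rle_dec _ _); [destruct (Rlt_dec _ _) |]; intros E.
  - injection E as <-; auto.
  - destruct (IHl E); auto.
  - destruct (IHl E); auto.
Qed.

Lemma first_band_None mu a l t :
  In t l -> / 2 ^ t * mu <= a < / 2 ^ (t - 1) * mu -> first_band mu a l <> None.
Proof.
  induction l as [|t' l IHl]; simpl; [tauto |]. intros [<- | Hin] [Hlo Hhi].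
  - destruct (Rle_dec _ _); [destruct (Rlt_dec _ _) |]; try discriminate; lra.
  - destruct (Rle_dec _ _); [destruct (Rlt_dec _ _) |]; try discriminate; apply IHl; auto.
Qed.

Lemma band_exists mu a m : 0 < mu -> (1 <= m)%nat -> / 2 ^ m * mu <= a -> a < mu ->
  exists t, (1 <= t <= m)%nat /\ / 2 ^ t * mu <= a < / 2 ^ (t - 1) * mu.
Proof.
  intros hmu. induction m; intros Hm Hlo Hhi; [lia |].
  destruct (Nat.eq_dec m 0) as [-> | Hm0].
  - exists 1%nat. simpl. split; [lia | lra].
  - destruct (Rle_dec (/ 2 ^ m * mu) a).
    + destruct IHm as [t [Ht Hb]]; auto; try lia. exists t; split; auto; lia.
    + exists (S m); split; [lia |]. simpl (S m - 1)%nat. rewrite Nat.sub_0_r. lra.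
Qed.

Lemma level_cases n mu a : 0 < mu -> (2 <= n)%nat ->
  (a < / 2 ^ (n - 2) / 3 * mu /\ level n mu a = 0) \/
  (/ 2 ^ (n - 2) / 3 * mu <= a < / 2 ^ (n - 2) * mu /\ level n mu a = / 2 ^ (n - 1)) \/
  (exists t, (1 <= t <= n - 2)%nat /\ / 2 ^ t * mu <= a < / 2 ^ (t - 1) * mu /\
     / 2 ^ (n - 2) * mu <= a < mu /\ level n mu a = / 2 ^ t) \/
  (mu <= a /\ level n mu a = 1).
Proof.
  intros hmu hn. unfold level.
  destruct (Rlt_dec _ _) as [Hsmall | Hsmall]; [left; auto |].
  destruct (Rlt_dec _ _) as [Hlast | Hlast]; [right; left; split; auto; lra |].
  destruct (Rle_dec _ _) as [Hbig | Hbig]; [right; right; right; auto |].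
  right; right; left.
  assert (Hn2 : (n - 2 <> 0)%nat) by (intros E; rewrite E in Hlast; simpl in Hlast; lra).
  destruct (band_exists mu a (n - 2)) as [t0 [Ht0 Hb0]]; auto; try lia; try lra.
  destruct (first_band mu a (seq 1 (n - 2))) as [t|] eqn:E.
  - destruct (first_band_Some _ _ _ _ E) as [Hin Hb]. apply in_seq in Hin.
    exists t. repeat split; auto; try lia; lra.
  - exfalso. apply (first_band_None mu a (seq 1 (n - 2)) t0); auto. apply in_seq; lia.
Qed.

Definition on_grid (n : nat) (q : R) : Prop := q = 0 \/ exists s, (s < n)%nat /\ q = / 2 ^ s.

Lemma level_on_grid n mu a : 0 < mu -> (2 <= n)%nat -> on_grid n (level n mu a).
Proof.
  intros hmu hn. unfold on_grid.
  destruct (level_cases n mu a hmu hn) as [[_ E] | [[_ E] | [[t [Ht [_ [_ E]]]] | [_ E]]]];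
    rewrite E.
  - left; auto.
  - right; exists (n - 1)%nat; split; [lia | reflexivity].
  - right; exists t; split; [lia | reflexivity].
  - right; exists 0%nat; split; [lia | simpl; field].
Qed.

Lemma level_ge0 n mu a : 0 < mu -> (2 <= n)%nat -> 0 <= level n mu a.
Proof.
  intros hmu hn. destruct (level_on_grid n mu a hmu hn) as [E | [s [_ E]]]; rewrite E;
  [lra | left; apply inv_pow2_pos].
Qed.

Lemma level_0 n mu : 0 < mu -> level n mu 0 = 0.
Proof.
  intros hmu. unfold level. destruct (Rlt_dec _ _) as [| Hnot]; auto.
  exfalso. apply Hnot. pose proof (inv_pow2_pos (n - 2)). apply Rmult_lt_0_compat; lra.
Qed.

Lemma level_mono n mu a1 a2 : 0 < mu -> (2 <= n)%nat -> a1 <= a2 ->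
  level n mu a1 <= level n mu a2.
Proof.
  intros hmu hn Ha.
  pose proof (inv_pow2_pos (n - 1)). pose proof (inv_pow2_le1 (n - 1)).
  assert (/ 2 ^ (n - 2) * mu <= mu) by (pose proof (inv_pow2_le1 (n - 2)); nra).
  assert (/ 2 ^ (n - 2) / 3 * mu <= / 2 ^ (n - 2) * mu)
    by (pose proof (inv_pow2_pos (n - 2)); unfold Rdiv; nra).
  destruct (level_cases n mu a1 hmu hn) as [[A1 E1]|[[A1 E1]|[[t1 [Ht1 [B1 [A1 E1]]]]|[A1 E1]]]];
  destruct (level_cases n mu a2 hmu hn) as [[A2 E2]|[[A2 E2]|[[t2 [Ht2 [B2 [A2 E2]]]]|[A2 E2]]]];
  rewrite E1, E2; try lra; try apply inv_pow2_le1; try (left; apply inv_pow2_pos).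
  - apply inv_pow2_le; lia.
  - destruct (Nat.le_gt_cases t2 t1); [apply inv_pow2_le; lia |].
    assert (/ 2 ^ (t2 - 1) <= / 2 ^ t1) by (apply inv_pow2_le; lia). nra.
Qed.

Lemma sgn_mul_self w : sgn w * w = Rabs w.
Proof.
  unfold sgn. destruct (Rlt_dec 0 w); [rewrite Rabs_right; lra |].
  destruct (Rlt_dec w 0); [rewrite Rabs_left; lra |].
  replace w with 0 by lra. rewrite Rabs_R0; ring.
Qed.

Lemma Rabs_sgn w : w <> 0 -> Rabs (sgn w) = 1.
Proof.
  intros Hw. unfold sgn. destruct (Rlt_dec 0 w); [apply Rabs_R1 |].
  destruct (Rlt_dec w 0); [rewrite Rabs_left; lra | lra].
Qed.

Lemma Rabs_Qtil n mu w : 0 < mu -> (2 <= n)%nat -> Rabs (Qtil n mu w) = level n mu (Rabs w).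
Proof.
  intros hmu hn. rewrite Qtil_level. destruct (Req_dec w 0) as [-> | Hw].
  - rewrite Rabs_R0, level_0, Rmult_0_r, Rabs_R0; auto.
  - rewrite Rabs_mult, Rabs_sgn, Rabs_right; auto; [ring |]. apply Rle_ge, level_ge0; auto.
Qed.

Lemma Qtil_mul_self n mu w : Qtil n mu w * w = level n mu (Rabs w) * Rabs w.
Proof. rewrite Qtil_level, <- sgn_mul_self. ring. Qed.

Lemma Qtil_sqr n mu w : 0 < mu -> (2 <= n)%nat -> Qtil n mu w ^ 2 = level n mu (Rabs w) ^ 2.
Proof. intros. rewrite <- Rabs_Qtil, <- pow2_abs by auto. reflexivity. Qed.

Definition reqb (x y : R) : bool := if Req_EM_T x y then true else false.
Definition rltb (x y : R) : bool := if Rlt_dec x y then true else false.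

Lemma reqb_spec x y : reqb x y = true <-> x = y.
Proof. unfold reqb; destruct (Req_EM_T x y); split; congruence. Qed.

Lemma reqb_false x y : reqb x y = false <-> x <> y.
Proof. rewrite <- not_true_iff_false, reqb_spec. reflexivity. Qed.

Lemma rltb_spec x y : rltb x y = true <-> x < y.
Proof. unfold rltb; destruct (Rlt_dec x y); split; intros; auto; try discriminate; contradiction. Qed.

Lemma rltb_false x y : rltb x y = false <-> ~ x < y.
Proof. rewrite <- not_true_iff_false, rltb_spec. reflexivity. Qed.

Lemma on_grid_le1 n q : on_grid n q -> q <= 1.
Proof. intros [-> | [s [_ ->]]]; [lra | apply inv_pow2_le1]. Qed.

Lemma on_grid_gt_succ n q t : on_grid n q -> / 2 ^ S t < q <-> / 2 ^ t < q \/ q = / 2 ^ t.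
Proof.
  pose proof (inv_pow2_lt t (S t) ltac:(lia)).
  intros [-> | [s [_ ->]]]; split; intros Hq; try (pose proof (inv_pow2_pos (S t)); lra);
    try (destruct Hq; lra).
  apply inv_pow2_lt_inv in Hq. destruct (Nat.eq_dec s t) as [-> | Hne]; [right; auto |].
  left. apply inv_pow2_lt; lia.
Qed.

Lemma on_grid_lt n q t : on_grid n q -> q < / 2 ^ t -> q <= / 2 ^ S t.
Proof.
  intros [-> | [s [_ ->]]] Hlt; [left; apply inv_pow2_pos |].
  apply inv_pow2_lt_inv in Hlt. apply inv_pow2_le; lia.
Qed.

Section Blocks.

Variables (N n : nat) (W h : nat -> R) (k : nat -> nat).
Hypothesis h_grid : forall i, (i < N)%nat -> on_grid n (h i).
Hypothesis h_mono :
  forall i j, (i < N)%nat -> (j < N)%nat -> Rabs (W i) <= Rabs (W j) -> h i <= h j.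
Hypothesis k_count : forall t, k t = countN (fun i => reqb (h i) (/ 2 ^ t)) N.

Lemma prefix_count t : prefix k t = countN (fun j => rltb (/ 2 ^ t) (h j)) N.
Proof.
  induction t as [|t IHt]; simpl.
  - symmetry. apply countN_eq0. intros i Hi. pose proof (on_grid_le1 _ _ (h_grid i Hi)).
    apply rltb_false. rewrite Rinv_1. lra.
  - rewrite IHt, k_count. symmetry. apply countN_disjoint_orb. intros i Hi.
    pose proof (on_grid_gt_succ _ _ t (h_grid i Hi)) as Hsucc.
    destruct (rltb (/ 2 ^ S t) (h i)) eqn:E1; destruct (rltb (/ 2 ^ t) (h i)) eqn:E2;
    destruct (reqb (h i) (/ 2 ^ t)) eqn:E3; cbn [andb orb]; split; auto;
    repeat match goal with
    | H : rltb _ _ = true |- _ => apply rltb_spec in H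
    | H : reqb _ _ = true |- _ => apply reqb_spec in H
    | H : rltb _ _ = false |- _ => apply rltb_false in H
    | H : reqb _ _ = false |- _ => apply reqb_false in H
    end; try tauto; lra.
Qed.

(* Ties in |W| are harmless: [h] is constant on them, so each block is still the
   level set of [h]; this is why no distinctness hypothesis is needed. *)
Lemma block_of_rank t i : (i < N)%nat ->
  (Nat.leb (prefix k t) (rank N W i) && Nat.ltb (rank N W i) (prefix k (S t)))%bool
  = reqb (h i) (/ 2 ^ t).
Proof.
  intros Hi. change (rank N W i) with (countN (fun j => rltb (Rabs (W i)) (Rabs (W j))) N).
  rewrite !prefix_count.
  assert (above : forall j, (j < N)%nat -> h i < h j -> Rabs (W i) < Rabs (W j)).
  { intros j Hj Hlt. destruct (Rlt_dec (Rabs (W i)) (Rabs (W j))) as [|Hge]; auto.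
    pose proof (h_mono j i Hj Hi ltac:(lra)). lra. }
  assert (self : rltb (Rabs (W i)) (Rabs (W i)) = false) by (apply rltb_false; lra).
  assert (larger_le : forall j, (j < N)%nat -> rltb (Rabs (W i)) (Rabs (W j)) = true -> h i <= h j)
    by (intros j Hj Hlt; apply rltb_spec in Hlt; apply h_mono; auto; lra).
  pose proof (inv_pow2_lt t (S t) ltac:(lia)).
  destruct (reqb (h i) (/ 2 ^ t)) eqn:E.
  - apply reqb_spec in E. apply andb_true_intro; split.
    + apply Nat.leb_le, countN_mono. intros j Hj Hlt. apply rltb_spec in Hlt.
      apply rltb_spec, above; auto; lra.
    + apply Nat.ltb_lt, countN_mono_lt with i; auto; [| apply rltb_spec; lra].
      intros j Hj Hlt. apply rltb_spec. pose proof (larger_le j Hj Hlt). lra.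
  - apply reqb_false in E. destruct (Rlt_dec (/ 2 ^ t) (h i)) as [Hgt | Hle].
    + apply andb_false_intro1, Nat.leb_gt, countN_mono_lt with i; auto;
        [| apply rltb_spec; lra].
      intros j Hj Hlt. apply rltb_spec. pose proof (larger_le j Hj Hlt). lra.
    + assert (h i <= / 2 ^ S t) by (apply on_grid_lt with n; auto; lra).
      apply andb_false_intro2, Nat.ltb_ge, countN_mono. intros j Hj Hlt.
      apply rltb_spec in Hlt. apply rltb_spec, above; auto; lra.
Qed.

Lemma sumR_level_set (g : nat -> R) c i : (i < N)%nat ->
  (h i = 0 -> c = 0) -> (forall s, (s < n)%nat -> h i = / 2 ^ s -> g s = c) ->
  sumR (fun t => if reqb (h i) (/ 2 ^ t) then g t else 0) n = c.
Proof.
  intros Hi Hzero Hg. destruct (h_grid i Hi) as [E | [s [Hs E]]].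
  - rewrite Hzero by auto. apply sumR_eq0. intros t Ht.
    destruct (reqb (h i) (/ 2 ^ t)) eqn:R; auto. apply reqb_spec in R.
    pose proof (inv_pow2_pos t). lra.
  - rewrite (sumR_only _ n s); auto.
    + destruct (reqb (h i) (/ 2 ^ s)) eqn:R; [apply Hg; auto |]. now apply reqb_false in R.
    + intros t Ht Hne. destruct (reqb (h i) (/ 2 ^ t)) eqn:R; auto. apply reqb_spec in R.
      rewrite E in R. apply inv_pow2_inj in R. lia.
Qed.

Lemma sum_counts_sqr :
  sumR (fun t => INR (k t) * / 2 ^ (2 * t)) n = sumR (fun i => h i ^ 2) N.
Proof.
  transitivity
    (sumR (fun t => sumR (fun i => if reqb (h i) (/ 2 ^ t) then / 2 ^ (2 * t) else 0) N) n).
  { apply sumR_ext; intros t _. rewrite k_count. apply INR_countN_mul. }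
  rewrite <- sumR_comm. apply sumR_ext; intros i Hi. apply sumR_level_set; auto.
  - intros ->; ring.
  - intros s _ ->. rewrite Nat.mul_comm, pow_mult, <- pow_inv. reflexivity.
Qed.

Lemma sum_block_l1 :
  sumR (fun t => / 2 ^ t * block_l1 N W k t) n = sumR (fun i => h i * Rabs (W i)) N.
Proof.
  transitivity
    (sumR (fun t => sumR (fun i => if reqb (h i) (/ 2 ^ t) then / 2 ^ t * Rabs (W i) else 0) N) n).
  { apply sumR_ext; intros t _. unfold block_l1. rewrite <- sumR_scal.
    apply sumR_ext; intros i Hi. rewrite block_of_rank by auto. destruct (reqb _ _); ring. }
  rewrite <- sumR_comm. apply sumR_ext; intros i Hi. apply sumR_level_set; auto.
  - intros ->; ring.
  - intros s _ ->. reflexivity.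
Qed.

End Blocks.

Lemma powerRZ2_Int_part_log2R r : 0 < r ->
  powerRZ 2 (Int_part (log2R r)) <= r < 2 * powerRZ 2 (Int_part (log2R r)).
Proof.
  intros hr. destruct (base_Int_part (log2R r)) as [Hlo Hhi].
  set (z := Int_part (log2R r)) in *.
  assert (E : Rpower 2 (log2R r) = r) by (apply Rpower_Rlog; lra).
  rewrite powerRZ_Rpower by lra.
  replace (2 * Rpower 2 (IZR z)) with (Rpower 2 (IZR z + 1))
    by (rewrite Rpower_plus, Rpower_1; lra).
  rewrite <- E. split; [apply Rle_Rpower | apply Rpower_lt]; lra.
Qed.

Lemma powerRZ2_double_le s z : (s < z)%Z -> 2 * powerRZ 2 s <= powerRZ 2 z.
Proof.
  intros Hsz. rewrite !powerRZ_Rpower by lra.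
  replace (2 * Rpower 2 (IZR s)) with (Rpower 2 (IZR s + 1))
    by (rewrite Rpower_plus, Rpower_1; lra).
  apply Rle_Rpower; [lra |]. apply Zlt_le_succ, IZR_le in Hsz. rewrite succ_IZR in Hsz. lra.
Qed.

(* [A y^2 - 2 B y] crosses the value at [x] exactly at [y = 2B/A - x]. *)
Lemma quadratic_le_at_doubling A B x y : 0 < A -> x <= 4 * B / (3 * A) < 2 * x ->
  2 * y <= x \/ 2 * x <= y -> x ^ 2 * A - 2 * x * B <= y ^ 2 * A - 2 * y * B.
Proof.
  intros hA [Hlo Hhi] Hy. set (r := 4 * B / (3 * A)) in *.
  assert (Gap : y ^ 2 * A - 2 * y * B - (x ^ 2 * A - 2 * x * B)
                = A * ((y - x) * (x + y - 3 / 2 * r))) by (unfold r; field; lra).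
  enough (0 <= (y - x) * (x + y - 3 / 2 * r)) by nra.
  destruct Hy; [| apply Rmult_le_pos; lra]. nra.
Qed.

Lemma Int_part_log2R_argmin A B s : 0 < A -> 0 < B ->
  let z := Int_part (log2R (4 * B / (3 * A))) in
  powerRZ 2 z ^ 2 * A - 2 * powerRZ 2 z * B <= powerRZ 2 s ^ 2 * A - 2 * powerRZ 2 s * B.
Proof.
  intros hA hB z.
  assert (Hz : powerRZ 2 z <= 4 * B / (3 * A) < 2 * powerRZ 2 z)
    by (apply powerRZ2_Int_part_log2R; apply Rdiv_lt_0_compat; lra).
  destruct (Z.lt_total s z) as [Hlt | [-> | Hgt]]; [| lra |];
    apply quadratic_le_at_doubling; auto.
  - left; apply powerRZ2_double_le; auto.
  - right; apply powerRZ2_double_le; auto.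
Qed.

Lemma err_quadratic N n mu W s : 0 < mu -> (2 <= n)%nat ->
  err N n mu W s = powerRZ 2 s ^ 2 * sumR (fun i => level n mu (Rabs (W i)) ^ 2) N
    - 2 * powerRZ 2 s * sumR (fun i => level n mu (Rabs (W i)) * Rabs (W i)) N
    + sumR (fun i => W i ^ 2) N.
Proof.
  intros hmu hn. unfold err. induction N; [unfold sumR; simpl; ring |].
  rewrite !sumR_S, IHN, <- Qtil_sqr, <- Qtil_mul_self by auto. ring.
Qed.

Lemma sstar_argmin (n N : nat) (W : nat -> R) (mu : R) (hn : (2 <= n)%nat) (hmu : 0 < mu)
  (hQ : exists i, (i < N)%nat /\ Qtil n mu (W i) <> 0) :
  forall s : Z, err N n mu W (sstar N n mu W) <= err N n mu W s.
Proof.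
  intros s. set (h := fun i => level n mu (Rabs (W i))).
  assert (h_grid : forall i, (i < N)%nat -> on_grid n (h i)) by (intros; apply level_on_grid; auto).
  assert (h_mono : forall i j, (i < N)%nat -> (j < N)%nat -> Rabs (W i) <= Rabs (W j) -> h i <= h j)
    by (intros; apply level_mono; auto).
  assert (k_count : forall t, ktil N n mu W t = countN (fun i => reqb (h i) (/ 2 ^ t)) N).
  { intros t. apply countN_ext. intros i _. unfold reqb, h. rewrite Rabs_Qtil by auto. reflexivity. }
  assert (h_ge0 : forall i, 0 <= h i) by (intros; apply level_ge0; auto).
  destruct hQ as [i0 [Hi0 HQ0]].
  assert (h_i0 : 0 < h i0) by (unfold h; rewrite <- Rabs_Qtil by auto; apply Rabs_pos_lt; auto).
  assert (W_i0 : 0 < Rabs (W i0)).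
  { apply Rabs_pos_lt. intros E. unfold h in h_i0. rewrite E, Rabs_R0, level_0 in h_i0; lra. }
  assert (hA : 0 < sumR (fun i => h i ^ 2) N)
    by (apply sumR_gt0 with i0; auto; [intros; apply pow2_ge_0 | nra]).
  assert (hB : 0 < sumR (fun i => h i * Rabs (W i)) N).
  { apply sumR_gt0 with i0; auto; [| nra].
    intros i _. apply Rmult_le_pos; auto; apply Rabs_pos. }
  rewrite !err_quadratic by auto. apply Rplus_le_compat_r.
  unfold sstar; cbv zeta.
  rewrite (sum_block_l1 N n W h _ h_grid h_mono k_count), (sum_counts_sqr N n h _ h_grid k_count).
  apply Int_part_log2R_argmin; auto.
Qed.

Theorem theorem2 (b N : nat) (W : nat -> R) (mu : R)
  (hb : (3 <= b)%nat)
  (hdist : forall i j, (i < N)%nat -> (j < N)%nat -> i <> j -> Rabs (W i) <> Rabs (W j))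
  (hmu : 0 < mu)
  (hQ : exists i, (i < N)%nat /\ Qtil (2 ^ (b - 2)) mu (W i) <> 0) :
  forall s : Z,
    err N (2 ^ (b - 2)) mu W (sstar N (2 ^ (b - 2)) mu W) <= err N (2 ^ (b - 2)) mu W s.
Proof.
  apply sstar_argmin; auto.
  pose proof (Nat.pow_le_mono_r 2 1 (b - 2) ltac:(lia) ltac:(lia)). simpl in *. lia.
Qed.
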